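(* Let $k\ge1$ and $g_k(z):=-\log f_k(e^{-z})$ for $z>0$. Then: (a) $g_k(z)\sim e^{-kz}$ as $z\to\infty$; (b) $g_k(z)\sim\frac1k\log z^{-1}$ as $z\to0^+$; (c) $g_k$ is differentiable on $(0,\infty)$ and $g_k'(z)\sim-\frac{1}{kz}$ as $z\to0^+$.
   Context: For an integer $k\ge1$, $f_k:[0,1]\to[0,1]$ denotes the unique decreasing function satisfying $f_k(x)^k-f_k(x)^{k+1}=x^k-x^{k+1}$ for all $x\in[0,1]$; it is continuous with $f_k(0)=1$, $f_k(1)=0$. The notation $F\sim G$ means $F/G\to1$. *)

From Stdlib Require Import Reals.
Open Scope R_scope.

(* f is "the" function f_k of the paper: a decreasing map [0,1] -> [0,1]
   with f(x)^k - f(x)^(k+1) = x^k - x^(k+1) for all x in [0,1]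
   (such an f is unique, so quantifying over it is faithful). *)
Definition is_fk (k : nat) (f : R -> R) : Prop :=
  (forall x, 0 <= x <= 1 -> 0 <= f x <= 1) /\
  (forall x y, 0 <= x <= 1 -> 0 <= y <= 1 -> x < y -> f y <= f x) /\
  (forall x, 0 <= x <= 1 -> f x ^ k - f x ^ (k + 1) = x ^ k - x ^ (k + 1)).

Definition gk (f : R -> R) (z : R) : R := - ln (f (exp (- z))).

Definition equiv_at_infty (F G : R -> R) : Prop :=
  forall eps, 0 < eps -> exists M, forall z, M < z -> Rabs (F z / G z - 1) < eps.

Definition equiv_at_0plus (F G : R -> R) : Prop :=
  forall eps, 0 < eps -> exists d, 0 < d /\
    forall z, 0 < z < d -> Rabs (F z / G z - 1) < eps.

From Stdlib Require Import Reals Lra Lia.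
From Coquelicot Require Import Coquelicot.
Open Scope R_scope.

(* Let h(t) = t^k (1 - t); it increases on [0, p] and decreases on [p, 1],
   where p = k/(k+1), and f = f_k is the decreasing involution of [0, 1]
   exchanging the two branches: h (f x) = h x.  A decreasing involution of
   [0, 1] is continuous with f 0 = 1 and f 1 = 0.  Away from p, implicit
   differentiation gives f' x = h' x / h' (f x); at p, where h' vanishes,
   the second-order expansion of h gives ((f t - p)/(t - p))^2 -> 1, hence
   f' p = -1.

   Put x = e^{-z}, y = f x, so that y^k (1 - y) = x^k (1 - x).
   (a) As z -> oo, y -> 1 and -ln y ~ 1 - y = x^k (1 - x) / y^k ~ e^{-kz}.
   (b) As z -> 0+, y stays below p, and k ln y = -kz + ln (1 - x) - ln (1 - y)
       = ln z + O(1).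
   (c) g' z = x h'(x) / (y h'(y)) = (1 - y)(k - (k+1) x) / ((1 - x)(k - (k+1) y)),
       and as z -> 0+ we have x -> 1, y -> 0 and 1 - x ~ z. *)

Section FilterLimits.

Context {T : Type} {F : (T -> Prop) -> Prop} {FF : Filter F}.

Lemma filterlim_Rmult (u v : T -> R) (a b : R) :
  filterlim u F (locally a) -> filterlim v F (locally b) ->
  filterlim (fun t => u t * v t) F (locally (a * b)).
Proof. intros Hu Hv. exact (filterlim_comp_2 u v Rmult Hu Hv (filterlim_mult a b)). Qed.

Lemma filterlim_Rinv (v : T -> R) (b : R) :
  b <> 0 -> filterlim v F (locally b) -> filterlim (fun t => / v t) F (locally (/ b)).
Proof.
  intros Hb Hv. eapply filterlim_comp; [exact Hv|].
  apply (filterlim_Rbar_inv b). congruence.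
Qed.

Lemma filterlim_continuity_pt (u : T -> R) (phi : R -> R) (a b : R) :
  filterlim u F (locally a) -> continuity_pt phi a -> phi a = b ->
  filterlim (fun t => phi (u t)) F (locally b).
Proof.
  intros Hu Hphi <-. eapply filterlim_comp; [exact Hu|].
  now apply continuity_pt_filterlim.
Qed.

Lemma filterlim_within_of {U : Type} (D : U -> Prop) (G : (U -> Prop) -> Prop) (u : T -> U) :
  filterlim u F G -> F (fun t => D (u t)) -> filterlim u F (within D G).
Proof.
  intros Hu HD P HP. unfold filtermap.
  apply (filter_imp (fun t => D (u t) /\ (D (u t) -> P (u t)))).
  - intros t [Ht H]. exact (H Ht).
  - exact (filter_and _ _ HD (Hu _ HP)).
Qed.

Lemma filterlim_eventually_nonzero (u : T -> R) (b : R) :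
  filterlim u F (locally b) -> b <> 0 -> F (fun t => u t <> 0).
Proof.
  intros Hu Hb. assert (Hpos : 0 < Rabs b) by now apply Rabs_pos_lt.
  apply (filter_imp (fun t => ball b (mkposreal _ Hpos) (u t))).
  - intros t Ht Hz. change (Rabs (u t - b) < Rabs b) in Ht.
    rewrite Hz, Rminus_0_l, Rabs_Ropp in Ht. lra.
  - now apply filterlim_locally.
Qed.

Lemma filterlim_ratio_of_bounded_diff (u v : T -> R) (B : R) :
  filterlim v F (Rbar_locally p_infty) -> F (fun t => Rabs (u t - v t) <= B) ->
  filterlim (fun t => u t / v t) F (locally 1).
Proof.
  intros Hv HB. apply filterlim_locally. intros [eps Heps]; simpl.
  assert (Hbig : F (fun t => (Rabs B + 1) / eps < v t)).
  { apply Hv. now exists ((Rabs B + 1) / eps). }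
  refine (filter_imp _ _ _ (filter_and _ _ HB Hbig)). intros t [Hd Hlarge].
  assert (HM : 0 < (Rabs B + 1) / eps) by (apply Rdiv_lt_0_compat; [pose proof (Rabs_pos B)|]; lra).
  assert (Hbound : Rabs B + 1 < eps * v t).
  { apply (Rmult_lt_compat_l eps) in Hlarge; [|lra].
    now replace (eps * ((Rabs B + 1) / eps)) with (Rabs B + 1) in Hlarge by (field; lra). }
  change (Rabs (u t / v t - 1) < eps).
  replace (u t / v t - 1) with ((u t - v t) / v t) by (field; lra).
  rewrite Rabs_div, (Rabs_right (v t)) by lra.
  apply Rlt_div_l; [lra|]. pose proof (Rle_abs B). lra.
Qed.

End FilterLimits.

Lemma locally_open_interval (a b c : R) : a < c < b -> locally c (fun t => a < t < b).
Proof. intros Hc. apply filter_and; [now apply open_gt | now apply open_lt]. Qed.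

Lemma locally'_punctured (a : R) : locally' a (fun t => t <> a).
Proof. unfold locally', within. apply filter_forall. auto. Qed.

Lemma equiv_at_infty_of_filterlim (u v : R -> R) :
  filterlim (fun z => u z / v z) (Rbar_locally p_infty) (locally 1) ->
  equiv_at_infty u v.
Proof.
  intros H eps Heps.
  destruct (proj1 (filterlim_locally _ _) H (mkposreal eps Heps)) as [M HM].
  exists M. exact HM.
Qed.

Lemma equiv_at_0plus_of_filterlim (u v : R -> R) :
  filterlim (fun z => u z / v z) (at_right 0) (locally 1) ->
  equiv_at_0plus u v.
Proof.
  intros H eps Heps.
  destruct (proj1 (filterlim_locally _ _) H (mkposreal eps Heps)) as [d Hd].
  exists d. split; [apply cond_pos|]. intros z [Hz0 Hz1]. apply Hd; [|lra].
  change (Rabs (z - 0) < d). rewrite Rminus_0_r, Rabs_right; lra.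
Qed.

Lemma derivable_pt_lim_iff_is_lim_slope (H : R -> R) (a l : R) :
  derivable_pt_lim H a l <-> is_lim (fun t => (H t - H a) / (t - a)) a l.
Proof.
  split.
  - intros HD. apply filterlim_locally. intros [eps Heps].
    destruct (HD eps Heps) as [d Hd]. exists d. intros t Ht Hta.
    change R in t. change (Rabs (t - a) < d) in Ht.
    specialize (Hd (t - a) ltac:(lra) Ht). now replace (a + (t - a)) with t in Hd by ring.
  - intros HL eps Heps.
    destruct (proj1 (filterlim_locally _ _) HL (mkposreal eps Heps)) as [d Hd].
    exists d. intros u Hu0 Hu.
    assert (Hball : ball a d (a + u))
      by (change (Rabs (a + u - a) < d); now replace (a + u - a) with u by ring).
    specialize (Hd (a + u) Hball ltac:(lra)). now replace (a + u - a) with u in Hd by ring.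
Qed.

Lemma Rolle_derivable_pt_lim (phi dphi : R -> R) (u v : R) :
  (forall s, derivable_pt_lim phi s (dphi s)) -> u < v -> phi u = phi v ->
  exists c, u < c < v /\ dphi c = 0.
Proof.
  intros Hd Huv Heq.
  pose (pr := fun s (_ : u < s < v) =>
    exist (fun l => derivable_pt_lim phi s l) (dphi s) (Hd s) : derivable_pt phi s).
  destruct (Rolle phi u v pr) as [c [P Hc]]; auto.
  - intros s _. apply derivable_continuous_pt. exact (exist _ (dphi s) (Hd s)).
  - now exists c.
Qed.

(* Cauchy's mean value theorem for [H] and [s |-> (s - a)^2]. *)
Lemma second_order_mean_value (H dH : R -> R) (a t : R) :
  (forall s, derivable_pt_lim H s (dH s)) -> t <> a ->
  exists c, 0 < Rabs (c - a) < Rabs (t - a) /\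
    (t - a) ^ 2 * dH c = 2 * (c - a) * (H t - H a).
Proof.
  intros Hd Hta.
  set (phi := fun s => (t - a) ^ 2 * H s - (H t - H a) * (s - a) ^ 2).
  set (dphi := fun s => (t - a) ^ 2 * dH s - (H t - H a) * (2 * (s - a))).
  assert (Hphi : forall s, derivable_pt_lim phi s (dphi s)).
  { intros s. apply is_derive_Reals. unfold phi, dphi.
    apply (is_derive_minus (fun s => (t - a) ^ 2 * H s)).
    - apply is_derive_scal, is_derive_Reals, Hd.
    - auto_derive; [easy | ring]. }
  assert (Hends : phi t = phi a) by (unfold phi; ring).
  destruct (Rlt_dec t a) as [Hlt | Hge].
  - destruct (Rolle_derivable_pt_lim phi dphi t a Hphi Hlt Hends) as [c [Hc Hc0]].
    exists c. unfold dphi in Hc0. split; [rewrite !Rabs_left; lra | lra].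
  - destruct (Rolle_derivable_pt_lim phi dphi a t Hphi ltac:(lra) (eq_sym Hends)) as [c [Hc Hc0]].
    exists c. unfold dphi in Hc0. split; [rewrite !Rabs_right; lra | lra].
Qed.

Lemma is_lim_second_order_slope (H dH : R -> R) (a l : R) :
  (forall s, derivable_pt_lim H s (dH s)) -> dH a = 0 -> derivable_pt_lim dH a l ->
  is_lim (fun t => (H t - H a) / (t - a) ^ 2) a (l / 2).
Proof.
  intros Hd Ha Hdd. apply derivable_pt_lim_iff_is_lim_slope in Hdd. rewrite Ha in Hdd.
  apply filterlim_locally. intros [eps Heps].
  destruct (proj1 (filterlim_locally _ _) Hdd (mkposreal (2 * eps) ltac:(lra))) as [d Hdl].
  exists d. intros t Ht Hta. change R in t. change (Rabs (t - a) < d) in Ht.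
  destruct (second_order_mean_value H dH a t Hd Hta) as [c [[Hc0 Hc] Hceq]].
  assert (Hca : c - a <> 0) by (intro E; rewrite E, Rabs_R0 in Hc0; lra).
  assert (Hta' : t - a <> 0) by lra.
  specialize (Hdl c ltac:(change (Rabs (c - a) < d); lra) ltac:(lra)).
  change (Rabs ((dH c - 0) / (c - a) - l) < 2 * eps) in Hdl.
  change (Rabs ((H t - H a) / (t - a) ^ 2 - l / 2) < eps).
  assert (E : H t - H a = (t - a) ^ 2 * dH c / (2 * (c - a))).
  { apply (Rmult_eq_reg_l (2 * (c - a))); [rewrite <- Hceq; field | ]; lra. }
  replace ((H t - H a) / (t - a) ^ 2 - l / 2) with (((dH c - 0) / (c - a) - l) / 2)
    by (rewrite E; field; lra).
  rewrite Rabs_div, (Rabs_right 2); lra.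
Qed.

Lemma derivable_pt_lim_level_set (H g : R -> R) (x dHx dHg : R) :
  derivable_pt_lim H x dHx -> derivable_pt_lim H (g x) dHg -> dHg <> 0 ->
  is_lim g x (g x) -> locally' x (fun t => g t <> g x /\ H (g t) = H t) ->
  H (g x) = H x ->
  derivable_pt_lim g x (dHx / dHg).
Proof.
  intros Hx Hg Hne Hcont Hloc Hgx.
  apply derivable_pt_lim_iff_is_lim_slope in Hx, Hg.
  assert (Hcomp : filterlim (fun t => (H (g t) - H (g x)) / (g t - g x))
                    (locally' x) (locally dHg)).
  { apply (@is_lim_comp' _ (locally' x) _ g (fun s => (H s - H (g x)) / (s - g x))
             (g x) dHg Hcont Hg).
    refine (filter_imp _ _ _ Hloc). intros t [Ht _] E. now injection E. }
  assert (Hnz := filterlim_eventually_nonzero _ _ Hcomp Hne).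
  apply derivable_pt_lim_iff_is_lim_slope.
  refine (filterlim_ext_loc _ _ _ (filterlim_Rmult _ _ _ _ Hx (filterlim_Rinv _ _ Hne Hcomp))).
  refine (filter_imp _ _ _ (filter_and _ _ (locally'_punctured x) (filter_and _ _ Hloc Hnz))).
  intros t [Htx [[Hgt Heq] Hq]]. rewrite Heq, Hgx in *.
  assert (H t - H x <> 0) by (intro E; apply Hq; rewrite E; unfold Rdiv; ring).
  field. repeat split; lra.
Qed.

(* With [Q] the second-order slope at [a], [H (g t) = H t] gives
   [((g t - a) / (t - a))^2 = Q t / Q (g t) -> 1]; the sign condition picks the root [-1]. *)
Lemma derivable_pt_lim_reflection (H dH g : R -> R) (a l : R) :
  (forall s, derivable_pt_lim H s (dH s)) -> dH a = 0 -> derivable_pt_lim dH a l -> l <> 0 ->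
  g a = a -> is_lim g a a ->
  locally' a (fun t => (g t - a) * (t - a) < 0 /\ H (g t) = H t) ->
  derivable_pt_lim g a (-1).
Proof.
  intros Hd Ha Hdd Hl Hga Hcont Hloc.
  set (Q := fun t => (H t - H a) / (t - a) ^ 2).
  assert (HQ : is_lim Q a (l / 2)) by exact (is_lim_second_order_slope H dH a l Hd Ha Hdd).
  assert (HQg : filterlim (fun t => Q (g t)) (locally' a) (locally (l / 2))).
  { apply (@is_lim_comp' _ (locally' a) _ g Q a (l / 2) Hcont HQ).
    refine (filter_imp _ _ _ Hloc). intros t [Hs _] E. injection E as E. rewrite E in Hs. lra. }
  assert (Hl2 : l / 2 <> 0) by lra.
  assert (Hratio : filterlim (fun t => Q t * / Q (g t)) (locally' a) (locally 1)).
  { replace 1 with (l / 2 * / (l / 2)) by (field; lra).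
    exact (filterlim_Rmult _ _ _ _ HQ (filterlim_Rinv _ _ Hl2 HQg)). }
  apply derivable_pt_lim_iff_is_lim_slope. rewrite Hga.
  change (filterlim (fun t => (g t - a) / (t - a)) (locally' a) (locally (-1))).
  apply (filterlim_ext_loc (fun t => - sqrt (Q t * / Q (g t)))).
  - refine (filter_imp _ _ _ (filter_and _ _ (locally'_punctured a)
      (filter_and _ _ Hloc (filterlim_eventually_nonzero _ _ HQg Hl2)))).
    intros t [Hta [[Hsign Heq] Hq]].
    set (r := (g t - a) / (t - a)).
    assert (Hgta : g t - a <> 0) by (intro E; rewrite E in Hsign; lra).
    assert (Hr : r < 0).
    { unfold r. replace ((g t - a) / (t - a)) with ((g t - a) * (t - a) / (t - a) ^ 2)
        by (field; lra).
      apply Rdiv_neg_pos; [lra | apply pow2_gt_0; lra]. }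
    assert (Hdiff : H t - H a <> 0)
      by (intro E; apply Hq; unfold Q; rewrite Heq, E; unfold Rdiv; ring).
    replace (Q t * / Q (g t)) with (Rsqr r)
      by (unfold Q, r, Rsqr; rewrite Heq; field; repeat split; lra).
    rewrite sqrt_Rsqr_abs, Rabs_left by exact Hr. ring.
  - apply (filterlim_continuity_pt _ (fun s => - sqrt s) 1 _ Hratio).
    + apply (continuity_pt_opp sqrt), continuity_pt_sqrt. lra.
    + now rewrite sqrt_1.
Qed.

Lemma increasing_of_derivative_pos (H dH : R -> R) (u v : R) :
  (forall s, derivable_pt_lim H s (dH s)) -> (forall s, u < s < v -> 0 < dH s) ->
  forall a b, u <= a -> b <= v -> a < b -> H a < H b.
Proof.
  intros Hd Hpos a b Ha Hb Hab.
  pose (pr := fun s => exist (fun l => derivable_pt_lim H s l) (dH s) (Hd s) : derivable_pt H s).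
  apply (derive_increasing_interv u v H pr); [lra | exact Hpos | lra | lra | exact Hab].
Qed.

Lemma ln_le (a b : R) : 0 < a -> a <= b -> ln a <= ln b.
Proof.
  intros Ha Hab. destruct (Req_dec a b) as [->|]; [lra | apply Rlt_le, ln_increasing; lra].
Qed.

Lemma one_minus_exp_neg_bounds (z : R) : 0 < z -> z * exp (- z) <= 1 - exp (- z) <= z.
Proof.
  intros Hz. pose proof (exp_ineq1_le (- z)). pose proof (exp_ineq1_le z).
  assert (exp z * exp (- z) = 1) by (rewrite <- exp_plus, Rplus_opp_r; apply exp_0).
  pose proof (exp_pos (- z)). split; nra.
Qed.

Lemma Rabs_ln_one_minus_exp_neg_div (z : R) : 0 < z -> Rabs (ln ((1 - exp (- z)) / z)) <= z.
Proof.
  intros Hz. pose proof (one_minus_exp_neg_bounds z Hz) as [Hlo Hhi].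
  pose proof (exp_pos (- z)).
  assert (Hq : exp (- z) <= (1 - exp (- z)) / z <= 1).
  { split; [apply Rle_div_r | apply Rle_div_l]; lra. }
  pose proof (ln_le _ _ (exp_pos (- z)) (proj1 Hq)) as Hlo'.
  pose proof (ln_le ((1 - exp (- z)) / z) 1 ltac:(lra) (proj2 Hq)) as Hhi'.
  rewrite ln_exp in Hlo'. rewrite ln_1 in Hhi'. apply Rabs_le. lra.
Qed.

Lemma exp_neg_unit_interval (z : R) : 0 < z -> 0 < exp (- z) < 1.
Proof. intros Hz. split; [apply exp_pos | rewrite <- exp_0; apply exp_increasing; lra]. Qed.

Lemma exp_neg_between (b z : R) : 0 < b -> 0 < z < - ln b -> b < exp (- z) < 1.
Proof.
  intros Hb Hz. rewrite <- (exp_ln b) at 1 by exact Hb. rewrite <- exp_0.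
  split; apply exp_increasing; lra.
Qed.

Lemma at_right_0_interval (b : R) : 0 < b -> at_right 0 (fun z => 0 < z < b).
Proof.
  intros Hb. unfold at_right, within.
  apply (filter_imp (F := locally 0) (fun z => - b < z < b));
    [intros z Hz Hz0; lra | apply locally_open_interval; lra].
Qed.

Lemma filterlim_id_at_right (a : R) : filterlim (fun z => z) (at_right a) (locally a).
Proof. exact (filterlim_filter_le_1 _ (filter_le_within _) (@filterlim_id _ (locally a))). Qed.

Lemma filterlim_exp_neg_at_infty :
  filterlim (fun z => exp (- z)) (Rbar_locally p_infty) (locally 0).
Proof.
  apply (is_lim_comp (fun s => exp s) Ropp p_infty 0 m_infty is_lim_exp_m).
  - exact (is_lim_opp _ _ _ (is_lim_id p_infty)).
  - now exists 0.
Qed.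

Lemma filterlim_exp_neg_at_0plus : filterlim (fun z => exp (- z)) (at_right 0) (locally 1).
Proof.
  apply (filterlim_continuity_pt _ (fun z => exp (- z)) 0 _ (filterlim_id_at_right 0));
    [reg | now rewrite Ropp_0, exp_0].
Qed.

Lemma filterlim_div_one_minus_exp_neg :
  filterlim (fun z => z / (1 - exp (- z))) (at_right 0) (locally 1).
Proof.
  assert (Hpos := at_right_0_interval 1 Rlt_0_1).
  assert (Hq : filterlim (fun z => (1 - exp (- z)) / z) (at_right 0) (locally 1)).
  { apply (filterlim_ext_loc (fun z => (exp (- z) - 1) / (- z))).
    { refine (filter_imp _ _ _ Hpos). intros z Hz. field. lra. }
    apply (is_lim_comp' (fun z => - z) (fun s => (exp s - 1) / s) 0 1);
      [| exact is_lim_div_expm1_0 |].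
    - apply (filterlim_continuity_pt _ (fun z => - z) 0 _ (filterlim_id_at_right 0)); [reg | ring].
    - refine (filter_imp _ _ _ Hpos). intros z Hz E. injection E. lra. }
  pose proof (filterlim_Rinv _ _ R1_neq_R0 Hq) as Hinv. rewrite Rinv_1 in Hinv.
  refine (filterlim_ext_loc _ _ _ Hinv).
  refine (filter_imp _ _ _ Hpos). intros z Hz.
  pose proof (exp_neg_unit_interval z ltac:(lra)). field. lra.
Qed.

Lemma filterlim_scaled_ln_inv_at_0plus (c : R) : 0 < c ->
  filterlim (fun z => c * ln (/ z)) (at_right 0) (Rbar_locally p_infty).
Proof.
  intros Hc.
  eapply filterlim_comp;
    [eapply filterlim_comp; [exact filterlim_Rinv_0_right | exact is_lim_ln_p]|].
  pose proof (filterlim_Rbar_mult_l c p_infty) as H.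
  replace (Rbar_mult c p_infty) with p_infty in H; [exact H|].
  simpl. destruct (Rle_dec 0 c) as [Hle|]; [|lra].
  destruct (Rle_lt_or_eq_dec _ _ Hle); [reflexivity | lra].
Qed.

Lemma pow_succ_pred (t : R) (n : nat) : (1 <= n)%nat -> t ^ n = t * t ^ pred n.
Proof. intros Hn. rewrite <- (Nat.succ_pred_pos n) at 1 by lia. reflexivity. Qed.

Definition hk (k : nat) (t : R) : R := t ^ k * (1 - t).

Definition dhk (k : nat) (t : R) : R := t ^ pred k * (INR k - INR (k + 1) * t).

Definition peak (k : nat) : R := INR k / INR (k + 1).

Section Peak.

Variable k : nat.
Hypothesis k_pos : (1 <= k)%nat.

Let INR_k_pos : 0 < INR k.
Proof. apply lt_0_INR. lia. Qed.

Let INR_Sk : INR (k + 1) = INR k + 1.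
Proof. rewrite plus_INR. simpl. ring. Qed.

Lemma peak_bounds : 0 < peak k < 1.
Proof.
  unfold peak. rewrite INR_Sk. split.
  - apply Rdiv_lt_0_compat; lra.
  - apply Rlt_div_l; lra.
Qed.

Lemma one_minus_peak : 1 - peak k = / INR (k + 1).
Proof. unfold peak. rewrite INR_Sk. field. lra. Qed.

Lemma ln_peak_neg : ln (peak k) < 0.
Proof. pose proof peak_bounds. rewrite <- ln_1. apply ln_increasing; lra. Qed.

Lemma dhk_factor (t : R) : dhk k t = INR (k + 1) * t ^ pred k * (peak k - t).
Proof. unfold dhk, peak. field. rewrite INR_Sk. lra. Qed.

Lemma derivable_pt_lim_hk (t : R) : derivable_pt_lim (hk k) t (dhk k t).
Proof.
  apply is_derive_Reals. unfold hk, dhk. auto_derive; [easy|].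
  rewrite (pow_succ_pred t k k_pos), INR_Sk. ring.
Qed.

Lemma dhk_peak : dhk k (peak k) = 0.
Proof. rewrite dhk_factor. ring. Qed.

Lemma derivable_pt_lim_dhk_peak :
  derivable_pt_lim (dhk k) (peak k) (- INR (k + 1) * peak k ^ pred k).
Proof.
  apply is_derive_Reals.
  apply (is_derive_ext (fun t => INR (k + 1) * t ^ pred k * (peak k - t))).
  { intros t. now rewrite dhk_factor. }
  auto_derive; [easy | ring].
Qed.

Lemma dhk_pos (t : R) : 0 < t < peak k -> 0 < dhk k t.
Proof.
  intros Ht. rewrite dhk_factor. pose proof (pow_lt t (pred k) ltac:(lra)).
  apply Rmult_lt_0_compat; [apply Rmult_lt_0_compat|]; lra.
Qed.

Lemma dhk_neg (t : R) : peak k < t -> dhk k t < 0.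
Proof.
  intros Ht. pose proof peak_bounds. rewrite dhk_factor.
  pose proof (pow_lt t (pred k) ltac:(lra)).
  assert (0 < INR (k + 1) * t ^ pred k) by (apply Rmult_lt_0_compat; lra). nra.
Qed.

Lemma hk_increasing (a b : R) : 0 <= a -> b <= peak k -> a < b -> hk k a < hk k b.
Proof.
  apply (increasing_of_derivative_pos _ (dhk k));
    [exact derivable_pt_lim_hk | intros; now apply dhk_pos].
Qed.

Lemma hk_decreasing (a b : R) : peak k <= a -> b <= 1 -> a < b -> hk k b < hk k a.
Proof.
  intros Ha Hb Hab. enough (- hk k a < - hk k b) by lra.
  apply (increasing_of_derivative_pos (fun t => - hk k t) (fun t => - dhk k t) (peak k) 1);
    try assumption.
  - intros s. apply derivable_pt_lim_opp, derivable_pt_lim_hk.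
  - intros s Hs. pose proof (dhk_neg s (proj1 Hs)). lra.
Qed.

Lemma hk_inj_left (a b : R) : 0 <= a <= peak k -> 0 <= b <= peak k -> hk k a = hk k b -> a = b.
Proof.
  intros Ha Hb E. destruct (Rtotal_order a b) as [H|[H|H]]; [|exact H|].
  - pose proof (hk_increasing a b); lra.
  - pose proof (hk_increasing b a); lra.
Qed.

Lemma hk_inj_right (a b : R) : peak k <= a <= 1 -> peak k <= b <= 1 -> hk k a = hk k b -> a = b.
Proof.
  intros Ha Hb E. destruct (Rtotal_order a b) as [H|[H|H]]; [|exact H|].
  - pose proof (hk_decreasing a b); lra.
  - pose proof (hk_decreasing b a); lra.
Qed.

End Peak.

Section DecreasingInvolution.

Variable f : R -> R.
Hypothesis f_range : forall x, 0 <= x <= 1 -> 0 <= f x <= 1.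
Hypothesis f_antitone : forall x y, 0 <= x <= 1 -> 0 <= y <= 1 -> x < y -> f y <= f x.
Hypothesis f_involutive : forall x, 0 <= x <= 1 -> f (f x) = x.

Lemma involution_antitone_le (x y : R) : 0 <= x <= 1 -> 0 <= y <= 1 -> x <= y -> f y <= f x.
Proof. intros Hx Hy Hxy. destruct (Req_dec x y) as [->|Hne]; [lra | apply f_antitone; lra]. Qed.

Lemma involution_inj (x y : R) : 0 <= x <= 1 -> 0 <= y <= 1 -> f x = f y -> x = y.
Proof. intros Hx Hy E. now rewrite <- (f_involutive x Hx), <- (f_involutive y Hy), E. Qed.

Lemma involution_0 : f 0 = 1.
Proof.
  pose proof (f_range 1 ltac:(lra)). pose proof (f_range 0 ltac:(lra)).
  pose proof (involution_antitone_le 0 (f 1) ltac:(lra) ltac:(lra) ltac:(lra)).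
  rewrite f_involutive in *; lra.
Qed.

Lemma involution_1 : f 1 = 0.
Proof. rewrite <- involution_0. apply f_involutive. lra. Qed.

Lemma involution_interior (x : R) : 0 < x < 1 -> 0 < f x < 1.
Proof.
  intros Hx. pose proof (f_range x ltac:(lra)). split.
  - destruct (Req_dec (f x) 0) as [E|]; [|lra].
    rewrite <- involution_1 in E. apply involution_inj in E; lra.
  - destruct (Req_dec (f x) 1) as [E|]; [|lra].
    rewrite <- involution_0 in E. apply involution_inj in E; lra.
Qed.

Let involution_upper (c eps : R) : 0 <= c <= 1 -> 0 < eps ->
  locally c (fun t => 0 <= t <= 1 -> f t < f c + eps).
Proof.
  intros Hc Heps. pose proof (f_range c Hc).
  destruct (Rlt_dec (f c + eps / 2) 1) as [Hv|Hv].
  - set (v := f c + eps / 2). assert (Hv01 : 0 <= v <= 1) by (unfold v; lra).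
    assert (Hlt : f v < c).
    { destruct (Rlt_le_dec (f v) c) as [|Hle]; [assumption|].
      pose proof (involution_antitone_le c (f v) Hc (f_range v Hv01) Hle).
      rewrite f_involutive in *; unfold v in *; lra. }
    apply (filter_imp (fun t => f v < t)); [|now apply open_gt].
    intros t Ht Ht01. pose proof (involution_antitone_le (f v) t (f_range v Hv01) Ht01 ltac:(lra)).
    rewrite f_involutive in *; unfold v in *; lra.
  - apply filter_forall. intros t Ht. pose proof (f_range t Ht). lra.
Qed.

Let involution_lower (c eps : R) : 0 <= c <= 1 -> 0 < eps ->
  locally c (fun t => 0 <= t <= 1 -> f c - eps < f t).
Proof.
  intros Hc Heps. pose proof (f_range c Hc).
  destruct (Rlt_dec 0 (f c - eps / 2)) as [Hv|Hv].
  - set (v := f c - eps / 2). assert (Hv01 : 0 <= v <= 1) by (unfold v; lra).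
    assert (Hlt : c < f v).
    { destruct (Rlt_le_dec c (f v)) as [|Hle]; [assumption|].
      pose proof (involution_antitone_le (f v) c (f_range v Hv01) Hc Hle).
      rewrite f_involutive in *; unfold v in *; lra. }
    apply (filter_imp (fun t => t < f v)); [|now apply open_lt].
    intros t Ht Ht01. pose proof (involution_antitone_le t (f v) Ht01 (f_range v Hv01) ltac:(lra)).
    rewrite f_involutive in *; unfold v in *; lra.
  - apply filter_forall. intros t Ht. pose proof (f_range t Ht). lra.
Qed.

Lemma involution_continuous_within (c : R) : 0 <= c <= 1 ->
  filterlim f (within (fun t => 0 <= t <= 1) (locally c)) (locally (f c)).
Proof.
  intros Hc. apply filterlim_locally. intros [eps Heps].
  refine (filter_imp _ _ _ (filter_and _ _ (involution_upper c eps Hc Heps)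
    (involution_lower c eps Hc Heps))).
  intros t [Hu Hl] Ht. change (Rabs (f t - f c) < eps).
  specialize (Hu Ht). specialize (Hl Ht). apply Rabs_def1; lra.
Qed.

Lemma involution_continuous (c : R) : 0 < c < 1 -> is_lim f c (f c).
Proof.
  intros Hc. eapply filterlim_filter_le_1; [|exact (involution_continuous_within c ltac:(lra))].
  intros P HP. change (locally c (fun t => t <> c -> P t)).
  apply (filter_imp (fun t => (0 <= t <= 1 -> P t) /\ (0 < t /\ t < 1))).
  - intros t [HP' Ht] _. apply HP'. lra.
  - exact (filter_and (F := locally c) _ _ HP (locally_open_interval 0 1 c Hc)).
Qed.

End DecreasingInvolution.

(* The derivative of [f_k]: implicit differentiation of [hk k (f x) = hk k x]
   off the peak, and [-1] at the peak (see [derivable_pt_lim_reflection]). *)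
Definition dfk (k : nat) (f : R -> R) (x : R) : R :=
  if Req_dec_T x (peak k) then -1 else dhk k x / dhk k (f x).

Definition dgk (k : nat) (f : R -> R) (z : R) : R :=
  exp (- z) * dfk k f (exp (- z)) / f (exp (- z)).

Section Fk.

Variables (k : nat) (f : R -> R).
Hypothesis k_pos : (1 <= k)%nat.
Hypothesis f_is_fk : is_fk k f.

Let fk_range (x : R) : 0 <= x <= 1 -> 0 <= f x <= 1.
Proof. apply f_is_fk. Qed.

Let fk_antitone (x y : R) : 0 <= x <= 1 -> 0 <= y <= 1 -> x < y -> f y <= f x.
Proof. apply f_is_fk. Qed.

Lemma fk_hk (x : R) : 0 <= x <= 1 -> hk k (f x) = hk k x.
Proof.
  intros Hx. destruct f_is_fk as [_ [_ E]]. unfold hk.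
  replace (f x ^ k * (1 - f x)) with (f x ^ k - f x ^ (k + 1)) by (rewrite pow_add; ring).
  rewrite E by exact Hx. rewrite pow_add. ring.
Qed.

(* Otherwise [f] would fix both [x] and the midpoint of [x] and the peak,
   contradicting monotonicity. *)
Lemma fk_above_peak (x : R) : 0 <= x <= peak k -> peak k <= f x.
Proof.
  intros Hx. pose proof (peak_bounds k k_pos).
  destruct (Rle_lt_dec (peak k) (f x)) as [|Hlt]; [assumption | exfalso].
  assert (Hfix : forall t, 0 <= t <= peak k -> f t < peak k -> f t = t).
  { intros t Ht Hft. pose proof (fk_range t ltac:(lra)).
    apply (hk_inj_left k k_pos); [lra | lra | apply fk_hk; lra]. }
  assert (Hxfix := Hfix x Hx Hlt).
  set (b := (x + peak k) / 2).
  assert (Hxb : x < b) by (unfold b; lra).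
  assert (Hfb : f b <= f x) by (apply fk_antitone; unfold b in *; lra).
  assert (Hbfix : f b = b) by (apply Hfix; unfold b in *; lra).
  lra.
Qed.

Lemma fk_below_peak (x : R) : peak k <= x <= 1 -> f x <= peak k.
Proof.
  intros Hx. pose proof (peak_bounds k k_pos).
  destruct (Rle_lt_dec (f x) (peak k)) as [|Hlt]; [assumption | exfalso].
  assert (Hfix : forall t, peak k <= t <= 1 -> peak k < f t -> f t = t).
  { intros t Ht Hft. pose proof (fk_range t ltac:(lra)).
    apply (hk_inj_right k k_pos); [lra | lra | apply fk_hk; lra]. }
  assert (Hxfix := Hfix x Hx Hlt).
  set (b := (x + peak k) / 2).
  assert (Hbx : b < x) by (unfold b; lra).
  assert (Hfb : f x <= f b) by (apply fk_antitone; unfold b in *; lra).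
  assert (Hbfix : f b = b) by (apply Hfix; unfold b in *; lra).
  lra.
Qed.

Lemma fk_involutive (x : R) : 0 <= x <= 1 -> f (f x) = x.
Proof.
  intros Hx. pose proof (fk_range x Hx) as Hfx. pose proof (fk_range (f x) Hfx).
  assert (Heq : hk k (f (f x)) = hk k x) by (rewrite !fk_hk; auto).
  destruct (Rle_dec x (peak k)).
  - pose proof (fk_above_peak x ltac:(lra)). pose proof (fk_below_peak (f x) ltac:(lra)).
    apply (hk_inj_left k k_pos); [lra | lra | exact Heq].
  - pose proof (fk_below_peak x ltac:(lra)). pose proof (fk_above_peak (f x) ltac:(lra)).
    apply (hk_inj_right k k_pos); [lra | lra | exact Heq].
Qed.

Lemma fk_peak : f (peak k) = peak k.
Proof.
  pose proof (peak_bounds k k_pos).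
  pose proof (fk_above_peak (peak k) ltac:(lra)). pose proof (fk_below_peak (peak k) ltac:(lra)).
  lra.
Qed.

Let fk_inj := involution_inj f fk_involutive.
Let fk_0 : f 0 = 1 := involution_0 f fk_range fk_antitone fk_involutive.
Let fk_1 : f 1 = 0 := involution_1 f fk_range fk_antitone fk_involutive.
Let fk_interior := involution_interior f fk_range fk_antitone fk_involutive.
Let fk_continuous_within := involution_continuous_within f fk_range fk_antitone fk_involutive.
Let fk_continuous := involution_continuous f fk_range fk_antitone fk_involutive.

Lemma fk_ne_peak (x : R) : 0 <= x <= 1 -> x <> peak k -> f x <> peak k.
Proof.
  intros Hx Hne E. apply Hne. pose proof (peak_bounds k k_pos).
  apply fk_inj; [lra | lra | now rewrite E, fk_peak].
Qed.

Lemma derivable_pt_lim_fk (x : R) : 0 < x < 1 -> derivable_pt_lim f x (dfk k f x).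
Proof.
  intros Hx. pose proof (peak_bounds k k_pos).
  assert (Hloc : locally x (fun t => 0 < t < 1)) by now apply locally_open_interval.
  unfold dfk. destruct (Req_dec_T x (peak k)) as [->|Hne].
  - apply (derivable_pt_lim_reflection (hk k) (dhk k) f (peak k) _
      (derivable_pt_lim_hk k k_pos) (dhk_peak k k_pos) (derivable_pt_lim_dhk_peak k k_pos)).
    + assert (0 < INR (k + 1) * peak k ^ pred k)
        by (apply Rmult_lt_0_compat; [apply lt_0_INR; lia | apply pow_lt; lra]).
      lra.
    + exact fk_peak.
    + rewrite <- fk_peak at 2. now apply fk_continuous.
    + refine (filter_imp _ _ _ Hloc). intros t Ht Htp. split; [|apply fk_hk; lra].
      pose proof (fk_ne_peak t ltac:(lra) Htp).
      destruct (Rlt_le_dec t (peak k)).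
      * pose proof (fk_above_peak t ltac:(lra)). nra.
      * pose proof (fk_below_peak t ltac:(lra)). nra.
  - pose proof (fk_interior x Hx).
    apply (derivable_pt_lim_level_set (hk k)); try apply derivable_pt_lim_hk; try assumption.
    + pose proof (fk_ne_peak x ltac:(lra) Hne).
      destruct (Rlt_le_dec (f x) (peak k)).
      * pose proof (dhk_pos k k_pos (f x) ltac:(lra)). lra.
      * pose proof (dhk_neg k k_pos (f x) ltac:(lra)). lra.
    + now apply fk_continuous.
    + refine (filter_imp _ _ _ Hloc). intros t Ht Htx.
      split; [intro E; apply Htx, fk_inj; lra | apply fk_hk; lra].
    + apply fk_hk. lra.
Qed.

Lemma derivable_pt_lim_gk (z : R) : 0 < z -> derivable_pt_lim (gk f) z (dgk k f z).
Proof.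
  intros Hz. set (x := exp (- z)).
  assert (Hx : 0 < x < 1) by exact (exp_neg_unit_interval z Hz).
  pose proof (fk_interior x Hx) as Hfx.
  assert (Dx : derivable_pt_lim (fun z => exp (- z)) z (- x)).
  { apply is_derive_Reals. auto_derive; [easy | unfold x; ring]. }
  pose proof (derivable_pt_lim_comp _ _ _ _ _ Dx (derivable_pt_lim_fk x Hx)) as Dfx.
  pose proof (derivable_pt_lim_comp _ _ _ _ _ Dfx (derivable_pt_lim_ln _ (proj1 Hfx))) as Dln.
  replace (dgk k f z) with (- (/ f x * (dfk k f x * - x))) by (unfold dgk; fold x; field; lra).
  exact (derivable_pt_lim_opp _ _ _ Dln).
Qed.

Lemma fk_exp_neg_at_infty :
  filterlim (fun z => f (exp (- z))) (Rbar_locally p_infty) (locally 1).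
Proof.
  pose proof (fk_continuous_within 0 ltac:(lra)) as Hf0. rewrite fk_0 in Hf0.
  apply (filterlim_comp _ _ _ _ f _ (within (fun t => 0 <= t <= 1) (locally 0))); [|exact Hf0].
  apply filterlim_within_of; [exact filterlim_exp_neg_at_infty|].
  exists 0. intros z Hz. pose proof (exp_neg_unit_interval z Hz). lra.
Qed.

Lemma fk_exp_neg_at_0plus : filterlim (fun z => f (exp (- z))) (at_right 0) (locally 0).
Proof.
  pose proof (fk_continuous_within 1 ltac:(lra)) as Hf1. rewrite fk_1 in Hf1.
  apply (filterlim_comp _ _ _ _ f _ (within (fun t => 0 <= t <= 1) (locally 1))); [|exact Hf1].
  apply filterlim_within_of; [exact filterlim_exp_neg_at_0plus|].
  refine (filter_imp _ _ _ (at_right_0_interval 1 Rlt_0_1)). intros z Hz.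
  pose proof (exp_neg_unit_interval z ltac:(lra)). lra.
Qed.

Lemma gk_ratio_exp (z : R) : 0 < z ->
  gk f z / exp (- INR k * z) =
  ln (f (exp (- z))) / (f (exp (- z)) - 1) * ((1 - exp (- z)) * / f (exp (- z)) ^ k).
Proof.
  intros Hz. set (x := exp (- z)).
  assert (Hx : 0 < x < 1) by exact (exp_neg_unit_interval z Hz).
  pose proof (fk_interior x Hx) as Hy.
  assert (Hh : f x ^ k * (1 - f x) = x ^ k * (1 - x)) by exact (fk_hk x ltac:(lra)).
  assert (Hpow : exp (- INR k * z) = x ^ k).
  { unfold x. rewrite <- Rpower_pow by apply exp_pos.
    unfold Rpower. rewrite ln_exp. f_equal. ring. }
  assert (Hyk : 0 < f x ^ k) by (apply pow_lt; lra).
  unfold gk. fold x. rewrite Hpow.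
  replace (x ^ k) with (f x ^ k * (1 - f x) / (1 - x)) by (rewrite Hh; field; lra).
  field. repeat split; lra.
Qed.

Lemma gk_equiv_at_infty : equiv_at_infty (gk f) (fun z => exp (- INR k * z)).
Proof.
  apply equiv_at_infty_of_filterlim.
  set (x := fun z => exp (- z)). set (y := fun z => f (x z)).
  assert (Hpos : Rbar_locally p_infty (fun z => 0 < z)) by now exists 0.
  assert (Hy := fk_exp_neg_at_infty). fold x y in Hy.
  assert (Hlog : filterlim (fun z => ln (y z) / (y z - 1)) (Rbar_locally p_infty) (locally 1)).
  { apply (filterlim_ext (fun z => ln (1 + (y z - 1)) / (y z - 1))).
    { intros z. now replace (1 + (y z - 1)) with (y z) by ring. }
    apply (is_lim_comp' (fun z => y z - 1) (fun s => ln (1 + s) / s) 0 1);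
      [| exact is_lim_div_ln1p_0 |].
    - apply (filterlim_continuity_pt y (fun t => t - 1) 1 _ Hy); [reg | ring].
    - refine (filter_imp _ _ _ Hpos). intros z Hz E. injection E as E.
      pose proof (fk_interior (x z) (exp_neg_unit_interval z Hz)). unfold y in E. lra. }
  assert (Hfrac : filterlim (fun z => (1 - x z) * / y z ^ k) (Rbar_locally p_infty) (locally 1)).
  { assert (H1x : filterlim (fun z => 1 - x z) (Rbar_locally p_infty) (locally 1))
      by (apply (filterlim_continuity_pt x (fun t => 1 - t) 0 _ filterlim_exp_neg_at_infty);
          [reg | ring]).
    assert (Hyk : filterlim (fun z => y z ^ k) (Rbar_locally p_infty) (locally 1))
      by (apply (filterlim_continuity_pt y (fun t => t ^ k) 1 _ Hy); [reg | apply pow1]).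
    pose proof (filterlim_Rmult _ _ _ _ H1x (filterlim_Rinv _ _ R1_neq_R0 Hyk)) as H.
    now rewrite Rinv_1, Rmult_1_l in H. }
  pose proof (filterlim_Rmult _ _ _ _ Hlog Hfrac) as Hprod. rewrite Rmult_1_l in Hprod.
  refine (filterlim_ext_loc _ _ _ Hprod).
  refine (filter_imp _ _ _ Hpos). intros z Hz. now rewrite gk_ratio_exp.
Qed.

Lemma fk_log_hk (x : R) : 0 < x < 1 ->
  INR k * ln (f x) + ln (1 - f x) = INR k * ln x + ln (1 - x).
Proof.
  intros Hx. pose proof (fk_interior x Hx).
  rewrite <- !ln_pow, <- !ln_mult by (try apply pow_lt; lra).
  f_equal. exact (fk_hk x ltac:(lra)).
Qed.

Lemma gk_deviation_bound (z : R) : 0 < z < Rmin 1 (- ln (peak k)) ->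
  Rabs (gk f z - / INR k * ln (/ z)) <= (INR k + 1 + ln (INR (k + 1))) / INR k.
Proof.
  intros Hz. pose proof (peak_bounds k k_pos). pose proof (ln_peak_neg k k_pos).
  assert (Hk : 0 < INR k) by (apply lt_0_INR; lia).
  pose proof (Rmin_l 1 (- ln (peak k))). pose proof (Rmin_r 1 (- ln (peak k))).
  set (x := exp (- z)).
  assert (Hx : peak k < x < 1) by (apply exp_neg_between; lra).
  pose proof (fk_interior x ltac:(lra)) as Hy.
  pose proof (fk_below_peak x ltac:(lra)) as Hyp.
  assert (Hlog := fk_log_hk x ltac:(lra)).
  unfold x in Hlog. rewrite ln_exp in Hlog. fold x in Hlog.
  assert (E : gk f z - / INR k * ln (/ z)
              = (INR k * z - ln ((1 - x) / z) + ln (1 - f x)) / INR k).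
  { unfold gk. fold x. rewrite ln_Rinv, ln_div by lra.
    apply (Rmult_eq_reg_l (INR k)); [|lra].
    replace (INR k * (- ln (f x) - / INR k * - ln z)) with (- (INR k * ln (f x)) + ln z)
      by (field; lra).
    replace (INR k * ((INR k * z - (ln (1 - x) - ln z) + ln (1 - f x)) / INR k))
      with (INR k * z - (ln (1 - x) - ln z) + ln (1 - f x)) by (field; lra).
    lra. }
  assert (Hz1 := Rabs_ln_one_minus_exp_neg_div z ltac:(lra)). fold x in Hz1.
  assert (H1y : - ln (INR (k + 1)) <= ln (1 - f x) <= 0).
  { pose proof (one_minus_peak k k_pos).
    rewrite <- ln_Rinv, <- ln_1 by (rewrite plus_INR; simpl; lra).
    split; apply ln_le; lra. }
  rewrite E, Rabs_div, (Rabs_right (INR k)) by lra.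
  apply Rmult_le_compat_r; [apply Rlt_le, Rinv_0_lt_compat; lra|].
  pose proof (Rabs_triang (INR k * z - ln ((1 - x) / z)) (ln (1 - f x))).
  pose proof (Rabs_triang (INR k * z) (- ln ((1 - x) / z))).
  rewrite Rabs_Ropp in *. rewrite (Rabs_right (INR k * z)) in * by nra.
  rewrite (Rabs_left1 (ln (1 - f x))) in * by lra.
  assert (INR k * z <= INR k) by nra. unfold Rminus in *. lra.
Qed.

Lemma gk_equiv_at_0plus : equiv_at_0plus (gk f) (fun z => / INR k * ln (/ z)).
Proof.
  pose proof (ln_peak_neg k k_pos).
  assert (Hk : 0 < INR k) by (apply lt_0_INR; lia).
  apply equiv_at_0plus_of_filterlim.
  apply (filterlim_ratio_of_bounded_diff _ _ ((INR k + 1 + ln (INR (k + 1))) / INR k)).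
  - apply filterlim_scaled_ln_inv_at_0plus, Rinv_0_lt_compat, Hk.
  - refine (filter_imp _ _ gk_deviation_bound (at_right_0_interval _ _)).
    apply Rmin_pos; lra.
Qed.

Lemma dgk_ratio (z : R) : 0 < z < - ln (peak k) ->
  dgk k f z / (- / (INR k * z)) =
  z / (1 - exp (- z)) * (1 - f (exp (- z))) * (INR (k + 1) * exp (- z) - INR k)
    * (INR k / (INR k - INR (k + 1) * f (exp (- z)))).
Proof.
  intros Hz. pose proof (peak_bounds k k_pos).
  assert (Hk : 0 < INR k) by (apply lt_0_INR; lia).
  assert (Hk1 : 0 < INR (k + 1)) by (apply lt_0_INR; lia).
  set (x := exp (- z)). set (y := f x) in *.
  assert (Hx : peak k < x < 1) by (apply exp_neg_between; lra).
  pose proof (fk_interior x ltac:(lra)) as Hy. fold y in Hy.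
  assert (Hyp : y < peak k).
  { pose proof (fk_below_peak x ltac:(lra)) as Hb.
    pose proof (fk_ne_peak x ltac:(lra) ltac:(lra)) as Hn. fold y in Hb, Hn. lra. }
  assert (Hkx : INR k - INR (k + 1) * x < 0).
  { destruct Hx as [Hx _]. unfold peak in Hx. apply Rlt_div_l in Hx; lra. }
  assert (Hky : 0 < INR k - INR (k + 1) * y).
  { unfold peak in Hyp. apply Rlt_div_r in Hyp; lra. }
  assert (Hh : hk k y = hk k x) by (apply fk_hk; lra).
  unfold dgk, dfk. fold x y. destruct (Req_dec_T x (peak k)) as [E|_]; [lra|].
  unfold hk, dhk in *. rewrite !(pow_succ_pred _ k k_pos) in Hh.
  assert (HX : 0 < x ^ pred k) by (apply pow_lt; lra).
  replace (y ^ pred k) with (x * x ^ pred k * (1 - x) / (y * (1 - y))) by (field_simplify_eq; lra).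
  field. repeat split; lra.
Qed.

Lemma dgk_equiv_at_0plus : equiv_at_0plus (dgk k f) (fun z => - / (INR k * z)).
Proof.
  pose proof (ln_peak_neg k k_pos).
  assert (Hk : 0 < INR k) by (apply lt_0_INR; lia).
  apply equiv_at_0plus_of_filterlim.
  set (x := fun z => exp (- z)). set (y := fun z => f (x z)).
  assert (Hx := filterlim_exp_neg_at_0plus). assert (Hy := fk_exp_neg_at_0plus). fold x y in Hx, Hy.
  assert (H1y : filterlim (fun z => 1 - y z) (at_right 0) (locally 1))
    by (apply (filterlim_continuity_pt y (fun t => 1 - t) 0 _ Hy); [reg | ring]).
  assert (Hlin : filterlim (fun z => INR (k + 1) * x z - INR k) (at_right 0) (locally 1)).
  { apply (filterlim_continuity_pt x (fun t => INR (k + 1) * t - INR k) 1 _ Hx); [reg|].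
    rewrite plus_INR. simpl. ring. }
  assert (Hden : filterlim (fun z => INR k / (INR k - INR (k + 1) * y z)) (at_right 0) (locally 1)).
  { apply (filterlim_continuity_pt y (fun t => INR k / (INR k - INR (k + 1) * t)) 0 _ Hy).
    - reg. lra.
    - field. lra. }
  pose proof (filterlim_Rmult _ _ _ _ (filterlim_Rmult _ _ _ _
    (filterlim_Rmult _ _ _ _ filterlim_div_one_minus_exp_neg H1y) Hlin) Hden) as Hprod.
  rewrite !Rmult_1_l in Hprod.
  refine (filterlim_ext_loc _ _ _ Hprod).
  assert (Hnear := at_right_0_interval (- ln (peak k)) ltac:(lra)).
  refine (filter_imp _ _ _ Hnear). intros z Hz. now rewrite dgk_ratio.
Qed.

End Fk.

Theorem mainTheorem10 (k : nat) (f : R -> R) :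
  (1 <= k)%nat -> is_fk k f ->
  equiv_at_infty (gk f) (fun z => exp (- INR k * z)) /\
  equiv_at_0plus (gk f) (fun z => / INR k * ln (/ z)) /\
  exists g' : R -> R,
    (forall z, 0 < z -> derivable_pt_lim (gk f) z (g' z)) /\
    equiv_at_0plus g' (fun z => - / (INR k * z)).
Proof.
  intros Hk Hf.
  split; [exact (gk_equiv_at_infty k f Hk Hf)|].
  split; [exact (gk_equiv_at_0plus k f Hk Hf)|].
  exists (dgk k f). split.
  - exact (derivable_pt_lim_gk k f Hk Hf).
  - exact (dgk_equiv_at_0plus k f Hk Hf).
Qed.
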